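(* (i) Let $p_{1}, p_{2}, m, r \in \mathbb N$. Then \begin{align*} T(p_{1},p_{2},m,1,r,0) &=\sum_{i=2}^{m}\frac{(-1)^{m-i}}{r^{m-i+1}}S_{p_{1},p_{2},i}^{+,+,+} +\frac{(-1)^{m-1}}{r^{m}}\left(S_{p_{1},p_{2}+1}^{+,+}+S_{p_{2},p_{1}+1}^{+,+}\right) -\frac{(-1)^{m-1}}{r^{m}}\zeta(p_{1}+p_{2}+1)\\ &\quad +\frac{(-1)^{m-1}}{r^{m}}\sum_{b=1}^{r-1}S(p_{1},p_{2},1,b,0) +\frac{(-1)^{m-1}}{r^{m}}\left(\sum_{b=1}^{r-1}S(p_{2},p_{1},1,b,0) -\sum_{b=1}^{r-1}S(0,p_{1}+p_{2}+1,1,b,0)\right). \end{align*} (ii) Let $p_{1}, m, r \in \mathbb N$, $p_{2} \in \mathbb N_{0}$ with $m \geq p_{2}+2$. Then \begin{align*} T(p_{1},-p_{2},m,1,r,0)=\frac{1}{p_{2}+1}\sum_{\ell=0}^{p_{2}} \binom{p_{2}+1}{\ell}B_{\ell}^{+}S(p_{1},m-p_{2}-1+\ell,1,r,0)\,. \end{align*} (iii) Let $m, r \in \mathbb N$, $p_{1}, p_{2} \in \mathbb N_{0}$ with $m \geq p_{1}+p_{2}+3$. Then \begin{align*} T(-p_{1},-p_{2},m,1,r,0)=\frac{1}{(p_{1}+1)(p_{2}+1)}\sum_{\ell_{1}=0}^{p_{1}} \sum_{\ell_{2}=0}^{p_{2}} \binom{p_{1}+1}{\ell_{1}}\binom{p_{2}+1}{\ell_{2}}B_{\ell_{1}}^{+}B_{\ell_{2}}^{+}\,S(0,m-p_{1}-p_{2}-1+\ell_{1}+\ell_{2},1,r,0)\,.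 \end{align*}
   Context: $H_n^{(q)}=\sum_{j=1}^n j^{-q}$ for $q\in\mathbb N$; for an integer $q\ge0$, $H_n^{(-q)}=\sum_{\ell=1}^n\ell^q$ (so $H_n^{(0)}=n$). For $q,q_1,q_2\in\mathbb Z$ and $m,t,r\in\mathbb N$: $S(q,m,t,r,0):=\sum_{n=1}^\infty\frac{H_n^{(q)}}{n^{m}(n+r)^{t}}$ and $T(q_{1},q_{2},m,t,r,0):=\sum_{n=1}^\infty\frac{H_n^{(q_{1})}H_n^{(q_{2})}}{n^{m}(n+r)^{t}}$. $S_{p,q}^{+,+}:=\sum_{n\ge1} H_n^{(p)}/n^q$ and $S_{p_1,p_2,q}^{+,+,+}:=\sum_{n\ge1} H_n^{(p_1)}H_n^{(p_2)}/n^q$. Bernoulli numbers $B_j^{+}$: $\frac{x}{1-e^{-x}}=\sum_{j\ge0}B_j^{+}\frac{x^j}{j!}$. Empty sums are $0$. *)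

From Stdlib Require Import Reals Lra Lia ZArith List.
From Coquelicot Require Import Coquelicot.
Open Scope R_scope.

(* Finite sum  sum_{k=a}^{b} f k  (empty, i.e. 0, when b < a). *)
Definition fsum (a b : nat) (f : nat -> R) : R :=
  fold_right Rplus 0 (map f (seq a (S b - a))).

Definition sum1 (f : nat -> R) : R := Series (fun k => f (S k)).
Definition ex_sum1 (f : nat -> R) : Prop := ex_series (fun k => f (S k)).

(* Generalized harmonic number H_n^{(q)}, q : Z.
   For q > 0: sum_{j=1}^n j^{-q};  for q = -q' <= 0: sum_{l=1}^n l^{q'}
   (so H_n^{(0)} = n).  Both are sum_{j=1}^n j^{-q}. *)
Definition H (n : nat) (q : Z) : R :=
  fsum 1 n (fun j => powerRZ (INR j) (- q)).

(* Summand and value of S(q,m,t,r,0) = sum_{n>=1} H_n^{(q)} / (n^m (n+r)^t). *)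
Definition Sterm (q : Z) (m t r : nat) (n : nat) : R :=
  H n q / (INR n ^ m * (INR n + INR r) ^ t).
Definition Ssum (q : Z) (m t r : nat) : R := sum1 (Sterm q m t r).

Definition Tterm (q1 q2 : Z) (m t r : nat) (n : nat) : R :=
  H n q1 * H n q2 / (INR n ^ m * (INR n + INR r) ^ t).
Definition Tsum (q1 q2 : Z) (m t r : nat) : R := sum1 (Tterm q1 q2 m t r).

Definition ES2 (p q : nat) : R :=
  sum1 (fun n => H n (Z.of_nat p) / INR n ^ q).
Definition ES3 (p1 p2 q : nat) : R :=
  sum1 (fun n => H n (Z.of_nat p1) * H n (Z.of_nat p2) / INR n ^ q).

Definition zeta (s : nat) : R := sum1 (fun n => / INR n ^ s).

(* Bernoulli numbers B_j^+ via their generating function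
   x / (1 - e^{-x}) = sum_j B_j^+ x^j / j!, i.e. B_j^+ is the j-th derivative
   at 0 of this function (with its removable singularity at 0 filled by 1). *)
Definition bern_gf (x : R) : R := if Req_EM_T x 0 then 1 else x / (1 - exp (- x)).
Definition Bplus (j : nat) : R := Derive_n bern_gf j 0.

(* (i) Partial fractions split 1/(n^m (n+r)) into the powers 1/n^i, i >= 2, which give
   the sums S_{p1,p2,i}, plus a multiple of 1/n - 1/(n+r) = sum_{b<r} (1/(n+b) - 1/(n+b+1)).
   Against each of these telescoping differences, summation by parts trades
   h_n = H_n^(p1) H_n^(p2) for its increments
   h_n - h_(n-1) = H_n^(p1)/n^p2 + H_n^(p2)/n^p1 - 1/n^(p1+p2),
   which yields the sums S(.,.,1,b,0); the term b = 0 gives the linear sums and zeta.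
   (ii), (iii) Faulhaber's formula makes H_n^(-p) a polynomial in n with coefficients
   C(p+1,l) B_l^+ / (p+1), so T splits termwise into sums S. The B_l^+ are l! times the
   coefficients of the power series inverse to (1 - e^(-x))/x; these coefficients are
   bounded by 1, so x/(1 - e^(-x)) is that power series on (-1, 1).
   All series converge because H_n^(p) <= H_n^(1) <= 4 n^(1/4) for p >= 1, which makes
   every summand O(n^(-3/2)). *)

From Stdlib Require Import Reals Lra Lia ZArith List.
From Coquelicot Require Import Coquelicot.
Open Scope R_scope.

(** * Finite sums and series *)

Lemma fold_right_Rplus_init (c : R) (l : list R) :
  fold_right Rplus c l = fold_right Rplus 0 l + c.
Proof. induction l as [|x l IH]; simpl; [ring | rewrite IH; ring]. Qed.

Lemma fsum_empty a b f : (b < a)%nat -> fsum a b f = 0.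
Proof. intros Hba. unfold fsum. replace (S b - a)%nat with 0%nat by lia. reflexivity. Qed.

Lemma fsum_first a b f : (a <= b)%nat -> fsum a b f = f a + fsum (S a) b f.
Proof. intros Hab. unfold fsum. replace (S b - a)%nat with (S (S b - S a)) by lia. reflexivity. Qed.

Lemma fsum_last a b f : (a <= S b)%nat -> fsum a (S b) f = fsum a b f + f (S b).
Proof.
  intros Hab. unfold fsum.
  replace (S (S b) - a)%nat with (S (S b - a)) by lia.
  rewrite seq_S, map_app, fold_right_app.
  replace (a + (S b - a))%nat with (S b) by lia.
  cbn [map fold_right]. rewrite fold_right_Rplus_init. ring.
Qed.

Lemma fsum_single a f : fsum a a f = f a.
Proof. rewrite fsum_first, fsum_empty by lia. ring. Qed.

Lemma fsum_shift a b f : fsum (S a) (S b) f = fsum a b (fun k => f (S k)).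
Proof.
  unfold fsum. replace (S (S b) - S a)%nat with (S b - a)%nat by lia.
  rewrite <- seq_shift, map_map. reflexivity.
Qed.

Lemma fsum_ext a b f g :
  (forall k, (a <= k <= b)%nat -> f k = g k) -> fsum a b f = fsum a b g.
Proof.
  intros Hfg. unfold fsum. f_equal. apply map_ext_in.
  intros k Hk. apply in_seq in Hk. apply Hfg. lia.
Qed.

Lemma fsum_zero a b : fsum a b (fun _ => 0) = 0.
Proof. unfold fsum. induction (seq a (S b - a)) as [|k l IH]; simpl; [ring | rewrite IH; ring]. Qed.

Lemma fsum_add a b f g : fsum a b (fun k => f k + g k) = fsum a b f + fsum a b g.
Proof. unfold fsum. induction (seq a (S b - a)) as [|k l IH]; simpl; [ring | rewrite IH; ring]. Qed.

Lemma fsum_sub a b f g : fsum a b (fun k => f k - g k) = fsum a b f - fsum a b g.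
Proof. unfold fsum. induction (seq a (S b - a)) as [|k l IH]; simpl; [ring | rewrite IH; ring]. Qed.

Lemma fsum_scal a b c f : fsum a b (fun k => c * f k) = c * fsum a b f.
Proof. unfold fsum. induction (seq a (S b - a)) as [|k l IH]; simpl; [ring | rewrite IH; ring]. Qed.

Lemma fsum_le a b f g :
  (forall k, (a <= k <= b)%nat -> f k <= g k) -> fsum a b f <= fsum a b g.
Proof.
  intros Hfg. unfold fsum.
  assert (Hin : forall k, In k (seq a (S b - a)) -> f k <= g k).
  { intros k Hk. apply in_seq in Hk. apply Hfg. lia. }
  revert Hin. generalize (seq a (S b - a)) as l.
  induction l as [|k l IH]; simpl; intros Hin; [lra|].
  specialize (IH (fun j Hj => Hin j (or_intror Hj))).
  specialize (Hin k (or_introl eq_refl)). lra.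
Qed.

Lemma fsum_nonneg a b f : (forall k, (a <= k <= b)%nat -> 0 <= f k) -> 0 <= fsum a b f.
Proof. intros Hf. rewrite <- (fsum_zero a b). apply fsum_le. exact Hf. Qed.

Lemma fsum_Rabs a b f : Rabs (fsum a b f) <= fsum a b (fun k => Rabs (f k)).
Proof.
  unfold fsum. induction (seq a (S b - a)) as [|k l IH]; simpl.
  - rewrite Rabs_R0. lra.
  - eapply Rle_trans; [apply Rabs_triang | lra].
Qed.

Lemma fsum_swap a b c d (F : nat -> nat -> R) :
  fsum a b (fun i => fsum c d (F i)) = fsum c d (fun j => fsum a b (fun i => F i j)).
Proof.
  enough (Hl : forall l, fold_right Rplus 0 (map (fun i => fsum c d (F i)) l)
    = fsum c d (fun j => fold_right Rplus 0 (map (fun i => F i j) l))) by apply Hl.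
  induction l as [|k l IH]; simpl.
  - symmetry. apply fsum_zero.
  - rewrite IH, <- fsum_add. reflexivity.
Qed.

Lemma fsum_sum_f_R0 n f : fsum 0 n f = sum_f_R0 f n.
Proof.
  induction n as [|n IH]; [rewrite fsum_single; reflexivity|].
  rewrite fsum_last by lia. simpl. rewrite IH. reflexivity.
Qed.

Lemma fsum_sum_n n f : fsum 0 n f = sum_n f n.
Proof. rewrite sum_n_Reals. apply fsum_sum_f_R0. Qed.

Lemma fsum_telescope N u : fsum 0 N (fun k => u k - u (S k)) = u 0%nat - u (S N).
Proof.
  induction N as [|N IH]; [rewrite fsum_single; ring|].
  rewrite fsum_last, IH by lia. ring.
Qed.

Lemma fsum_rev N f : fsum 0 N f = fsum 0 N (fun i => f (N - i)%nat).
Proof.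
  revert f. induction N as [|N IH]; intros f; [rewrite !fsum_single; reflexivity|].
  rewrite fsum_first, fsum_shift, IH, fsum_last by lia.
  rewrite Nat.sub_diag, Rplus_comm. f_equal.
  apply fsum_ext. intros k Hk. f_equal. lia.
Qed.

Lemma fsum_delta N j g :
  (j <= N)%nat -> fsum 0 N (fun i => if Nat.eqb i j then g i else 0) = g j.
Proof.
  intros HjN. induction N as [|N IH].
  - replace j with 0%nat by lia. rewrite fsum_single. reflexivity.
  - rewrite fsum_last by lia. destruct (Nat.eqb_spec (S N) j) as [<-|Hne].
    + rewrite (fsum_ext _ _ _ (fun _ => 0)), fsum_zero; [ring|].
      intros k Hk. destruct (Nat.eqb_spec k (S N)); [lia | reflexivity].
    + rewrite IH by lia. ring.
Qed.

Lemma fsum_truncate m N f :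
  (m <= N)%nat -> fsum 0 m f = fsum 0 N (fun i => if Nat.leb i m then f i else 0).
Proof.
  intros HmN. induction N as [|N IH].
  - replace m with 0%nat by lia. rewrite !fsum_single. reflexivity.
  - destruct (Nat.eq_dec m (S N)) as [->|Hne].
    + apply fsum_ext. intros k Hk. destruct (Nat.leb_spec k (S N)); [reflexivity | lia].
    + rewrite fsum_last, <- IH by lia. destruct (Nat.leb_spec (S N) m); [lia | ring].
Qed.

Lemma fsum_triangle N (F : nat -> nat -> R) :
  fsum 0 N (fun l => fsum 0 (N - l) (F l)) = fsum 0 N (fun i => fsum 0 (N - i) (fun l => F l i)).
Proof.
  transitivity (fsum 0 N (fun l => fsum 0 N (fun i => if Nat.leb i (N - l) then F l i else 0))).
  { apply fsum_ext. intros l Hl. apply fsum_truncate. lia. }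
  rewrite fsum_swap. apply fsum_ext. intros i Hi.
  rewrite (fsum_truncate (N - i) N) by lia. apply fsum_ext. intros l Hl.
  destruct (Nat.leb_spec i (N - l)), (Nat.leb_spec l (N - i)); reflexivity || lia.
Qed.

Lemma is_series_0 : is_series (fun _ : nat => 0) 0.
Proof.
  apply is_series_Reals. intros eps Heps. exists 0%nat. intros n _.
  rewrite sum_cte, Rmult_0_l. unfold R_dist. rewrite Rminus_0_r, Rabs_R0. exact Heps.
Qed.

Lemma is_series_Rscal c (a : nat -> R) l : is_series a l -> is_series (fun n => c * a n) (c * l).
Proof. exact (is_series_scal_l c a l). Qed.

Lemma is_series_Rplus (a b : nat -> R) la lb :
  is_series a la -> is_series b lb -> is_series (fun n => a n + b n) (la + lb).
Proof. exact (is_series_plus a b la lb). Qed.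

Lemma is_series_fsum a b (F : nat -> nat -> R) (L : nat -> R) :
  (forall i, (a <= i <= b)%nat -> is_series (F i) (L i)) ->
  is_series (fun n => fsum a b (fun i => F i n)) (fsum a b L).
Proof.
  intros HF. unfold fsum.
  assert (Hin : forall i, In i (seq a (S b - a)) -> is_series (F i) (L i)).
  { intros i Hi. apply in_seq in Hi. apply HF. lia. }
  revert Hin. generalize (seq a (S b - a)) as l.
  induction l as [|i l IH]; simpl; intros Hin; [exact is_series_0|].
  exact (is_series_Rplus _ _ _ _ (Hin i (or_introl eq_refl))
           (IH (fun j Hj => Hin j (or_intror Hj)))).
Qed.

Lemma sum1_is_series f l : is_series (fun k => f (S k)) l -> ex_sum1 f /\ sum1 f = l.
Proof. intros Hf. split; [exists l; exact Hf | apply is_series_unique; exact Hf]. Qed.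

Lemma is_series_telescope u : is_lim_seq u 0 -> is_series (fun k => u k - u (S k)) (u 0%nat).
Proof.
  intros Hu.
  enough (Hlim : is_lim_seq (sum_n (fun k => u k - u (S k))) (u 0%nat)) by exact Hlim.
  apply (is_lim_seq_ext (fun N => u 0%nat - u (S N))).
  { intros N. rewrite <- fsum_sum_n, fsum_telescope. reflexivity. }
  replace (Finite (u 0%nat)) with (Finite (u 0%nat - 0)) by (f_equal; ring).
  apply is_lim_seq_minus'; [apply is_lim_seq_const | apply (is_lim_seq_incr_1 u); exact Hu].
Qed.

Lemma is_series_abel (a x : nat -> R) (l : R) :
  a 0%nat = 0 ->
  is_lim_seq (fun N => a (S N) * x (S (S N))) 0 ->
  is_series (fun k => (a (S k) - a k) * x (S k)) l ->
  is_series (fun k => a (S k) * (x (S k) - x (S (S k)))) l.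
Proof.
  intros Ha0 Hlim Hser.
  enough (Hsum : is_lim_seq (sum_n (fun k => a (S k) * (x (S k) - x (S (S k))))) l) by exact Hsum.
  apply (is_lim_seq_ext
           (fun N => sum_n (fun k => (a (S k) - a k) * x (S k)) N - a (S N) * x (S (S N)))).
  { intros N. rewrite <- !fsum_sum_n. induction N as [|N IH].
    - rewrite !fsum_single, Ha0. ring.
    - rewrite !fsum_last, <- IH by lia. ring. }
  replace (Finite l) with (Finite (l - 0)) by (f_equal; ring).
  apply is_lim_seq_minus'; [exact Hser | exact Hlim].
Qed.

(** * A summability test and bounds on harmonic numbers *)

Lemma inv_cube_le_telescope s t :
  1 <= s -> s <= t -> t * t = s * s + 1 -> / (s * s * s) <= 4 * (/ s - / t).
Proof.
  intros Hs Hst Ht.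
  assert (Hdiff : / s - / t = / ((t + s) * s * t)).
  { field_simplify_eq; [nra | lra]. }
  rewrite Hdiff, <- (Rinv_inv 4), <- Rinv_mult.
  apply Rinv_le_contravar; [nra|].
  assert (Hst2 : s * t <= s * s + / 2) by nra.
  nra.
Qed.

Lemma is_lim_seq_inv_sqrt : is_lim_seq (fun n => / sqrt (INR (S n))) 0.
Proof.
  assert (Hsqrt : is_lim_seq (fun n => sqrt (INR n)) p_infty).
  { exact (filterlim_comp _ _ _ INR sqrt eventually (Rbar_locally p_infty) _
             is_lim_seq_INR filterlim_sqrt_p). }
  apply (is_lim_seq_incr_1 (fun n => / sqrt (INR n))).
  exact (is_lim_seq_inv _ _ Hsqrt ltac:(discriminate)).
Qed.

Lemma INR_ge1 n : (1 <= n)%nat -> 1 <= INR n.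
Proof. intros Hn. apply (le_INR 1). exact Hn. Qed.

Lemma ex_sum1_le_pow_3_2 (f : nat -> R) C :
  (forall n, (1 <= n)%nat -> 0 <= f n <= C / (INR n * sqrt (INR n))) -> ex_sum1 f.
Proof.
  intros Hf.
  assert (HC : 0 <= C).
  { destruct (Hf 1%nat) as [H0 H1]; [lia|].
    replace (C / (INR 1 * sqrt (INR 1))) with C in H1 by (simpl; rewrite sqrt_1; field). lra. }
  apply (ex_series_le (fun k => f (S k))
           (fun k => C * 4 * (/ sqrt (INR (S k)) - / sqrt (INR (S (S k)))))).
  - intros k. destruct (Hf (S k) ltac:(lia)) as [H0 H1].
    change (norm (f (S k))) with (Rabs (f (S k))). rewrite Rabs_pos_eq by exact H0.
    assert (Hx := INR_ge1 (S k) ltac:(lia)).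
    assert (Hs := sqrt_sqrt (INR (S k)) ltac:(lra)).
    assert (Hs1 : 1 <= sqrt (INR (S k))) by (rewrite <- sqrt_1; apply sqrt_le_1_alt; exact Hx).
    assert (Hbound := inv_cube_le_telescope (sqrt (INR (S k))) (sqrt (INR (S (S k)))) Hs1).
    rewrite S_INR with (n := S k) in Hbound |- *.
    rewrite sqrt_sqrt in Hbound by lra.
    rewrite <- Hs in H1 at 1. rewrite Rmult_assoc.
    eapply Rle_trans; [exact H1|]. unfold Rdiv. apply Rmult_le_compat_l; [exact HC|].
    apply Hbound; [apply sqrt_le_1_alt; lra | rewrite sqrt_sqrt; lra].
  - eexists. exact (is_series_Rscal (C * 4) _ _
      (is_series_telescope (fun k => / sqrt (INR (S k))) is_lim_seq_inv_sqrt)).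
Qed.

Lemma div_le_pow_3_2 X D C n :
  (1 <= n)%nat -> 0 <= X <= C * sqrt (INR n) -> INR n ^ 2 <= D ->
  0 <= X / D <= C / (INR n * sqrt (INR n)).
Proof.
  intros Hn [HX0 HX1] HD.
  assert (Hx := INR_ge1 n Hn).
  assert (Hs := sqrt_sqrt (INR n) ltac:(lra)).
  assert (Hs0 : 0 < sqrt (INR n)) by (apply sqrt_lt_R0; lra).
  assert (Hsq : 0 < INR n ^ 2) by (apply pow_lt; lra).
  split; [apply Rmult_le_pos; [exact HX0 | left; apply Rinv_0_lt_compat; lra]|].
  apply (Rle_trans _ (C * sqrt (INR n) / INR n ^ 2)).
  - unfold Rdiv. apply Rmult_le_compat; [lra | left; apply Rinv_0_lt_compat; lra | lra |].
    apply Rinv_le_contravar; lra.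
  - right. rewrite <- Hs at 2 3. field. lra.
Qed.

Definition root4 (x : R) : R := sqrt (sqrt x).

Lemma root4_mul_root4 x : 0 <= x -> root4 x * root4 x = sqrt x.
Proof. intros Hx. apply sqrt_sqrt, sqrt_pos. Qed.

Lemma root4_pow4 x : 0 <= x -> root4 x ^ 4 = x.
Proof.
  intros Hx. replace (root4 x ^ 4) with ((root4 x * root4 x) * (root4 x * root4 x)) by ring.
  rewrite root4_mul_root4 by exact Hx. apply sqrt_sqrt. exact Hx.
Qed.

Lemma root4_ge1 x : 1 <= x -> 1 <= root4 x.
Proof.
  intros Hx. unfold root4.
  rewrite <- sqrt_1. apply sqrt_le_1_alt. rewrite <- sqrt_1. apply sqrt_le_1_alt. exact Hx.
Qed.

Lemma inv_pow4_le_telescope a b :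
  0 <= b -> b <= a -> 1 <= a -> a ^ 4 = b ^ 4 + 1 -> / a ^ 4 <= 4 * (a - b).
Proof.
  intros Hb Hba Ha Hab.
  assert (Hfactor : (a - b) * ((a + b) * (a * a + b * b)) = 1) by nra.
  assert (Hcube : (a + b) * (a * a + b * b) <= 4 * (a * a * a)).
  { apply (Rle_trans _ ((2 * a) * (2 * (a * a)))); [apply Rmult_le_compat; nra | nra]. }
  assert (Hdiff : 1 <= (a - b) * (4 * (a * a * a))).
  { rewrite <- Hfactor at 1. apply Rmult_le_compat_l; lra. }
  apply (Rmult_le_reg_r (a ^ 4)); [apply pow_lt; lra|].
  rewrite Rinv_l by (apply pow_nonzero; lra). nra.
Qed.

Lemma harmonic_le_root4 n : fsum 1 n (fun j => / INR j) <= 4 * root4 (INR n).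
Proof.
  induction n as [|n IH].
  - rewrite fsum_empty by lia. unfold root4. simpl. rewrite !sqrt_0. lra.
  - rewrite fsum_last by lia.
    assert (Hn := pos_INR n).
    assert (Ha : 1 <= root4 (INR (S n))) by (apply root4_ge1, INR_ge1; lia).
    assert (Hba : root4 (INR n) <= root4 (INR (S n))).
    { unfold root4. rewrite S_INR. apply sqrt_le_1_alt, sqrt_le_1_alt. lra. }
    assert (Hstep : / INR (S n) <= 4 * (root4 (INR (S n)) - root4 (INR n))).
    { rewrite <- (root4_pow4 (INR (S n))) at 1 by apply pos_INR.
      apply inv_pow4_le_telescope; [apply sqrt_pos | exact Hba | exact Ha |].
      rewrite !root4_pow4 by apply pos_INR. apply S_INR. }
    lra.
Qed.

Lemma H_empty q : H 0 q = 0.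
Proof. apply fsum_empty. lia. Qed.

Lemma H_Z0 n : H n 0 = INR n.
Proof.
  induction n as [|n IH]; [apply H_empty|].
  unfold H in *. rewrite fsum_last, IH, S_INR by lia. reflexivity.
Qed.

Lemma H_nat n p : H n (Z.of_nat p) = fsum 1 n (fun j => / INR j ^ p).
Proof.
  apply fsum_ext. intros j _. rewrite powerRZ_neg', <- pow_powerRZ. reflexivity.
Qed.

Lemma H_opp_nat n p : H n (- Z.of_nat p) = fsum 1 n (fun j => INR j ^ p).
Proof.
  apply fsum_ext. intros j _. rewrite Z.opp_involutive, pow_powerRZ. reflexivity.
Qed.

Lemma H_nat_S n p : H (S n) (Z.of_nat p) = H n (Z.of_nat p) + / INR (S n) ^ p.
Proof. rewrite !H_nat, fsum_last by lia. reflexivity. Qed.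

Lemma H_nat_nonneg n p : 0 <= H n (Z.of_nat p).
Proof.
  rewrite H_nat. apply fsum_nonneg. intros j Hj.
  left. apply Rinv_0_lt_compat, pow_lt, lt_0_INR. lia.
Qed.

Lemma H_nat_le_root4 n p : (1 <= p)%nat -> H n (Z.of_nat p) <= 4 * root4 (INR n).
Proof.
  intros Hp. eapply Rle_trans; [|apply harmonic_le_root4].
  rewrite H_nat. apply fsum_le. intros j Hj.
  assert (Hj1 := INR_ge1 j ltac:(lia)).
  apply Rinv_le_contravar; [lra|].
  rewrite <- pow_1 at 1. apply Rle_pow; assumption.
Qed.

Definition Hprod (p1 p2 n : nat) : R := H n (Z.of_nat p1) * H n (Z.of_nat p2).

Lemma Hprod_bound p1 p2 n : (1 <= p1)%nat -> (1 <= p2)%nat ->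
  0 <= Hprod p1 p2 n <= 16 * sqrt (INR n).
Proof.
  intros Hp1 Hp2. unfold Hprod.
  assert (H1 := H_nat_le_root4 n p1 Hp1). assert (H2 := H_nat_le_root4 n p2 Hp2).
  assert (P1 := H_nat_nonneg n p1). assert (P2 := H_nat_nonneg n p2).
  rewrite <- root4_mul_root4 by apply pos_INR.
  split; [apply Rmult_le_pos; assumption|].
  apply (Rle_trans _ ((4 * root4 (INR n)) * (4 * root4 (INR n)))); [|lra].
  apply Rmult_le_compat; assumption.
Qed.

Lemma H_nat_le_sqrt n p : (1 <= n)%nat -> (1 <= p)%nat ->
  0 <= H n (Z.of_nat p) <= 4 * sqrt (INR n).
Proof.
  intros Hn Hp. split; [apply H_nat_nonneg|].
  eapply Rle_trans; [apply H_nat_le_root4; exact Hp|].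
  assert (Hr := root4_ge1 (INR n) (INR_ge1 n Hn)).
  rewrite <- root4_mul_root4 by apply pos_INR. nra.
Qed.

Lemma pow2_le_pow_mul_add n k b : (1 <= n)%nat -> (1 <= k)%nat ->
  INR n ^ 2 <= INR n ^ k * (INR n + INR b) ^ 1.
Proof.
  intros Hn Hk. assert (Hx := INR_ge1 n Hn). assert (Hb := pos_INR b).
  assert (Hpow : INR n ^ 1 <= INR n ^ k) by (apply Rle_pow; assumption).
  simpl in *. nra.
Qed.

Lemma ex_sum1_Hprod_div_pow p1 p2 i : (1 <= p1)%nat -> (1 <= p2)%nat -> (2 <= i)%nat ->
  ex_sum1 (fun n => Hprod p1 p2 n / INR n ^ i).
Proof.
  intros Hp1 Hp2 Hi. apply (ex_sum1_le_pow_3_2 _ 16). intros n Hn.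
  apply div_le_pow_3_2; [exact Hn | apply Hprod_bound; assumption|].
  apply Rle_pow; [apply INR_ge1|]; assumption.
Qed.

Lemma ex_sum1_Sterm p k b : (1 <= p)%nat -> (1 <= k)%nat -> ex_sum1 (Sterm (Z.of_nat p) k 1 b).
Proof.
  intros Hp Hk. apply (ex_sum1_le_pow_3_2 _ 4). intros n Hn.
  apply div_le_pow_3_2;
    [exact Hn | apply H_nat_le_sqrt; assumption | apply pow2_le_pow_mul_add; assumption].
Qed.

Lemma ex_sum1_Sterm_0 k b : (2 <= k)%nat -> ex_sum1 (Sterm 0 k 1 b).
Proof.
  intros Hk. apply (ex_sum1_le_pow_3_2 _ 1). intros n Hn.
  assert (Hx := INR_ge1 n Hn). assert (Hb := pos_INR b).
  unfold Sterm. rewrite H_Z0.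
  replace (INR n / (INR n ^ k * (INR n + INR b) ^ 1))
    with (1 / (INR n ^ (k - 1) * (INR n + INR b) ^ 1)).
  2: { replace k with (S (k - 1)) at 2 by lia. simpl. field.
       assert (INR n ^ (k - 1) <> 0) by (apply pow_nonzero; lra). repeat split; lra. }
  apply div_le_pow_3_2; [exact Hn | | apply pow2_le_pow_mul_add; lia].
  assert (1 <= sqrt (INR n)) by (rewrite <- sqrt_1; apply sqrt_le_1_alt; exact Hx). lra.
Qed.

(** * Bernoulli numbers as power series coefficients *)

Definition expq_coef (j : nat) : R := (-1) ^ j / INR (fact (j + 1)).

(* The coefficients of the reciprocal of [(1 - exp (- x)) / x = \sum_j expq_coef j x^j],
   computed through a table of all earlier ones so that the strong recursion is structural. *)
Fixpoint bern_table (n : nat) : nat -> R :=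
  match n with
  | O => fun _ => 1
  | S n' => fun i => if Nat.leb i n' then bern_table n' i
                     else - fsum 0 n' (fun k => bern_table n' k * expq_coef (S n' - k))
  end.

Definition bern_coef (n : nat) : R := bern_table n n.

Lemma bern_table_stable n i : (i <= n)%nat -> bern_table n i = bern_coef i.
Proof.
  revert i. induction n as [|n IH]; intros i Hi.
  - replace i with 0%nat by lia. reflexivity.
  - destruct (Nat.eq_dec i (S n)) as [->|Hne]; [reflexivity|].
    simpl. destruct (Nat.leb_spec i n); [apply IH | ]; lia.
Qed.

Lemma bern_coef_S n :
  bern_coef (S n) = - fsum 0 n (fun k => bern_coef k * expq_coef (S n - k)).
Proof.
  unfold bern_coef at 1. cbn [bern_table].
  rewrite (proj2 (Nat.leb_gt (S n) n)) by lia. f_equal.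
  apply fsum_ext. intros k Hk. rewrite bern_table_stable by lia. reflexivity.
Qed.

Lemma expq_coef_0 : expq_coef 0 = 1.
Proof. unfold expq_coef. simpl. field. Qed.

Lemma bern_coef_conv n :
  fsum 0 n (fun k => bern_coef k * expq_coef (n - k)) = if Nat.eqb n 0 then 1 else 0.
Proof.
  destruct n as [|n].
  - rewrite fsum_single, Nat.sub_diag, expq_coef_0. unfold bern_coef. simpl. ring.
  - rewrite fsum_last, Nat.sub_diag, expq_coef_0, bern_coef_S by lia. simpl. ring.
Qed.

Lemma INR_fact_pos n : 0 < INR (fact n).
Proof. apply lt_0_INR, lt_O_fact. Qed.

Lemma Rabs_expq_coef j : Rabs (expq_coef j) = / INR (fact (j + 1)).
Proof.
  unfold expq_coef, Rdiv. rewrite Rabs_mult, <- RPow_abs.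
  replace (Rabs (-1)) with 1 by (rewrite Rabs_left; lra). rewrite pow1.
  rewrite Rabs_inv, Rabs_pos_eq by (left; apply INR_fact_pos). ring.
Qed.

Lemma Rabs_expq_coef_le1 j : Rabs (expq_coef j) <= 1.
Proof.
  rewrite Rabs_expq_coef, <- Rinv_1. apply Rinv_le_contravar; [lra|].
  apply (le_INR 1), lt_O_fact.
Qed.

Lemma sum_inv_fact_le n : fsum 0 n (fun k => / INR (fact (k + 2))) <= 1 - / INR (n + 2).
Proof.
  induction n as [|n IH]; [rewrite fsum_single; simpl; lra|].
  rewrite fsum_last by lia.
  assert (Hx : 0 < INR (n + 2)) by (apply lt_0_INR; lia).
  assert (Hfact : INR (n + 2) <= INR (fact (n + 2))).
  { apply le_INR. replace (n + 2)%nat with (S (S n)) by lia. rewrite fact_simpl.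
    assert (1 <= fact (S n))%nat by apply lt_O_fact. nia. }
  assert (Hstep : / INR (fact (S n + 2)) <= / INR (n + 2) - / (INR (n + 2) + 1)).
  { replace (S n + 2)%nat with (S (n + 2)) by lia. rewrite fact_simpl, mult_INR, S_INR.
    replace (/ INR (n + 2) - / (INR (n + 2) + 1)) with (/ ((INR (n + 2) + 1) * INR (n + 2)))
      by (field; lra).
    apply Rinv_le_contravar; [nra | apply Rmult_le_compat_l; lra]. }
  replace (S n + 2)%nat with (S (n + 2)) in * by lia. rewrite S_INR. lra.
Qed.

Lemma Rabs_bern_coef_le1 n : Rabs (bern_coef n) <= 1.
Proof.
  induction n as [n IH] using (well_founded_induction lt_wf).
  destruct n as [|n]; [unfold bern_coef; simpl; rewrite Rabs_R1; lra|].
  rewrite bern_coef_S, Rabs_Ropp. eapply Rle_trans; [apply fsum_Rabs|].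
  apply (Rle_trans _ (fsum 0 n (fun k => / INR (fact (S n - k + 1))))).
  { apply fsum_le. intros k Hk. rewrite Rabs_mult, Rabs_expq_coef.
    rewrite <- (Rmult_1_l (/ _)) at 2.
    apply Rmult_le_compat_r; [left; apply Rinv_0_lt_compat, INR_fact_pos | apply IH; lia]. }
  rewrite fsum_rev. eapply Rle_trans; [right | apply (Rle_trans _ _ _ (sum_inv_fact_le n))].
  - apply fsum_ext. intros k Hk. do 3 f_equal. lia.
  - assert (0 < / INR (n + 2)) by (apply Rinv_0_lt_compat, lt_0_INR; lia). lra.
Qed.

Lemma CV_radius_gt_of_bounded (c : nat -> R) x :
  (forall n, Rabs (c n) <= 1) -> Rabs x < 1 -> Rbar_lt (Rabs x) (CV_radius c).
Proof.
  intros Hc Hx. apply (Rbar_lt_le_trans (Rabs x) 1); [exact Hx|].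
  apply (proj1 (CV_radius_bounded c)). exists 1. intros n. rewrite pow1, Rmult_1_r. apply Hc.
Qed.

Lemma is_pseries_expq_coef x : x <> 0 -> is_pseries expq_coef x ((1 - exp (- x)) / x).
Proof.
  intros Hx. apply is_pseries_R.
  assert (Hexp : is_series (fun n => / INR (fact n) * (- x) ^ n) (exp (- x))).
  { eapply is_series_ext; [|exact (is_exp_Reals (- x))].
    intros n. unfold scal; simpl; unfold mult; simpl. rewrite pow_n_pow. ring. }
  assert (Htail : is_series (fun k => / INR (fact (S k)) * (- x) ^ (S k)) (exp (- x) - 1)).
  { apply (is_series_incr_1 (fun n => / INR (fact n) * (- x) ^ n)).
    replace (exp (- x)) with (exp (- x) - 1 + / INR (fact 0) * (- x) ^ 0) in Hexp
      by (simpl; field).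
    exact Hexp. }
  replace ((1 - exp (- x)) / x) with (- / x * (exp (- x) - 1)) by (field; exact Hx).
  eapply is_series_ext; [|exact (is_series_Rscal (- / x) _ _ Htail)].
  intros n. change (- / x * (/ INR (fact (S n)) * (- x) ^ S n) = expq_coef n * x ^ n).
  unfold expq_coef. replace (n + 1)%nat with (S n) by lia.
  assert (Hf := INR_fact_pos (S n)).
  replace (- x) with (-1 * x) by ring. rewrite Rpow_mult_distr, <- !tech_pow_Rmult.
  field. lra.
Qed.

Lemma PSeries_delta0 x : PSeries (fun n => if Nat.eqb n 0 then 1 else 0) x = 1.
Proof.
  apply is_pseries_unique, is_pseries_R.
  enough (Hlim : is_lim_seq (sum_n (fun k => (if Nat.eqb k 0 then 1 else 0) * x ^ k)) 1)
    by exact Hlim.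
  apply (is_lim_seq_ext (fun _ => 1)); [|apply is_lim_seq_const].
  intros N. rewrite <- fsum_sum_n, (fsum_ext _ _ _ (fun k => if Nat.eqb k 0 then 1 else 0)).
  - symmetry. apply (fsum_delta N 0 (fun _ => 1)). lia.
  - intros k _. destruct (Nat.eqb_spec k 0) as [->|]; simpl; ring.
Qed.

Lemma bern_gf_PSeries x : Rabs x < 1 -> bern_gf x = PSeries bern_coef x.
Proof.
  intros Hx. unfold bern_gf. destruct (Req_EM_T x 0) as [->|Hx0].
  - rewrite PSeries_0. reflexivity.
  - assert (Hprod := PSeries_mult bern_coef expq_coef x
                       (CV_radius_gt_of_bounded _ _ Rabs_bern_coef_le1 Hx)
                       (CV_radius_gt_of_bounded _ _ Rabs_expq_coef_le1 Hx)).
    rewrite (PSeries_ext _ (fun n => if Nat.eqb n 0 then 1 else 0)), PSeries_delta0,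
      (is_pseries_unique _ _ _ (is_pseries_expq_coef x Hx0)) in Hprod.
    2: { intros n. unfold PS_mult. rewrite <- fsum_sum_f_R0. apply bern_coef_conv. }
    assert (Hexp : 1 - exp (- x) <> 0).
    { intros He. apply Hx0.
      assert (Hexp0 : exp (- x) = exp 0) by (rewrite exp_0; lra).
      apply exp_inv in Hexp0. lra. }
    apply (Rmult_eq_reg_r ((1 - exp (- x)) / x)).
    + rewrite <- Hprod. field. split; assumption.
    + unfold Rdiv. apply Rmult_integral_contrapositive_currified;
        [exact Hexp | apply Rinv_neq_0_compat; exact Hx0].
Qed.

Lemma Bplus_bern_coef j : Bplus j = bern_coef j * INR (fact j).
Proof.
  unfold Bplus. rewrite (Derive_n_ext_loc bern_gf (PSeries bern_coef)).
  - apply Derive_n_coef.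
    assert (Hr := CV_radius_gt_of_bounded _ 0 Rabs_bern_coef_le1).
    rewrite Rabs_R0 in Hr. apply Hr. lra.
  - exists (mkposreal 1 Rlt_0_1). intros y Hy. apply bern_gf_PSeries.
    change (Rabs (y - 0) < 1) in Hy. rewrite Rminus_0_r in Hy. exact Hy.
Qed.

(** * Faulhaber's formula *)

Definition expneg_coef (j : nat) : R := (-1) ^ j / INR (fact j).

Lemma pow_sub1_div_fact x k :
  (x - 1) ^ k / INR (fact k) = fsum 0 k (fun i => x ^ i / INR (fact i) * expneg_coef (k - i)).
Proof.
  unfold Rminus. rewrite binomial, <- fsum_sum_f_R0.
  unfold Rdiv. rewrite Rmult_comm, <- fsum_scal. apply fsum_ext. intros i Hi.
  unfold expneg_coef, Binomial.C.
  assert (H1 := INR_fact_pos k). assert (H2 := INR_fact_pos i).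
  assert (H3 := INR_fact_pos (k - i)).
  replace (- (1)) with (-1) by ring. field. lra.
Qed.

Lemma expneg_coef_S j : expneg_coef (S j) = - expq_coef j.
Proof.
  unfold expneg_coef, expq_coef. replace (j + 1)%nat with (S j) by lia.
  assert (Hf := INR_fact_pos (S j)). simpl pow. field. lra.
Qed.

Lemma bern_coef_conv_expneg M :
  fsum 0 M (fun l => bern_coef l * expneg_coef (M - l))
  = bern_coef M - (if Nat.eqb M 1 then 1 else 0).
Proof.
  destruct M as [|M].
  - rewrite fsum_single. unfold expneg_coef. simpl. field.
  - rewrite fsum_last, Nat.sub_diag by lia.
    rewrite (fsum_ext _ _ _ (fun l => -1 * (bern_coef l * expq_coef (M - l)))).
    2: { intros l Hl. replace (S M - l)%nat with (S (M - l)) by lia.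
         rewrite expneg_coef_S. ring. }
    rewrite fsum_scal, bern_coef_conv. unfold expneg_coef.
    destruct M; simpl; field.
Qed.

(* [bern_poly N x] is the coefficient of [t^N] in [t exp (x t) / (1 - exp (- t))]. *)
Definition bern_poly (N : nat) (x : R) : R :=
  fsum 0 N (fun l => bern_coef l * x ^ (N - l) / INR (fact (N - l))).

Lemma bern_poly_sub1 N x :
  bern_poly (S N) (x - 1) = bern_poly (S N) x - x ^ N / INR (fact N).
Proof.
  unfold bern_poly.
  rewrite (fsum_ext _ _ _ (fun l => fsum 0 (S N - l)
             (fun i => bern_coef l * (x ^ i / INR (fact i) * expneg_coef (S N - l - i))))).
  2: { intros l Hl. rewrite fsum_scal, <- pow_sub1_div_fact. unfold Rdiv. ring. }
  rewrite fsum_triangle.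
  rewrite (fsum_ext _ _ _ (fun i => x ^ i / INR (fact i)
             * (bern_coef (S N - i) - (if Nat.eqb (S N - i) 1 then 1 else 0)))).
  2: { intros i Hi. rewrite <- bern_coef_conv_expneg, <- fsum_scal.
       apply fsum_ext. intros l Hl. replace (S N - l - i)%nat with (S N - i - l)%nat by lia. ring. }
  rewrite (fsum_ext _ _ _ (fun i => x ^ i / INR (fact i) * bern_coef (S N - i)
             - (if Nat.eqb i N then x ^ i / INR (fact i) else 0))).
  2: { intros i Hi. destruct (Nat.eqb_spec (S N - i) 1), (Nat.eqb_spec i N); lia || ring. }
  rewrite fsum_sub, (fsum_delta _ _ (fun i => x ^ i / INR (fact i))) by lia.
  f_equal. rewrite fsum_rev. apply fsum_ext. intros l Hl.
  replace (S N - (S N - l))%nat with l by lia. unfold Rdiv. ring.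
Qed.

Lemma bern_poly_0 N : bern_poly N 0 = bern_coef N.
Proof.
  unfold bern_poly. destruct N as [|N]; [rewrite fsum_single; simpl; field|].
  rewrite fsum_last by lia.
  rewrite (fsum_ext _ _ _ (fun _ => 0)), fsum_zero, Nat.sub_diag.
  - simpl. field.
  - intros k Hk. rewrite pow_i by lia. unfold Rdiv. ring.
Qed.

Lemma sum_pow_bern_poly p n :
  fsum 1 n (fun j => INR j ^ p) = INR (fact p) * (bern_poly (S p) (INR n) - bern_coef (S p)).
Proof.
  induction n as [|n IH].
  - rewrite fsum_empty by lia. simpl INR. rewrite bern_poly_0. ring.
  - rewrite fsum_last, IH by lia.
    assert (Hshift := bern_poly_sub1 p (INR (S n))).
    replace (INR (S n) - 1) with (INR n) in Hshift by (rewrite S_INR; ring).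
    rewrite Hshift. assert (Hf := INR_fact_pos p). field. lra.
Qed.

Lemma H_opp_faulhaber n p :
  H n (- Z.of_nat p) =
  / INR (p + 1) * fsum 0 p (fun l => Binomial.C (p + 1) l * Bplus l * INR n ^ (p + 1 - l)).
Proof.
  rewrite H_opp_nat, sum_pow_bern_poly. unfold bern_poly.
  rewrite fsum_last, Nat.sub_diag by lia. replace (p + 1)%nat with (S p) by lia.
  transitivity (INR (fact p) *
                fsum 0 p (fun l => bern_coef l * INR n ^ (S p - l) / INR (fact (S p - l)))).
  { simpl. field. }
  rewrite <- !fsum_scal. apply fsum_ext. intros l Hl. rewrite Bplus_bern_coef.
  unfold Binomial.C. rewrite fact_simpl, mult_INR.
  assert (H1 := INR_fact_pos p). assert (H2 := INR_fact_pos l).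
  assert (H3 := INR_fact_pos (S p - l)). assert (0 < INR (S p)) by (apply lt_0_INR; lia).
  field. lra.
Qed.

Lemma H_opp_div_pow n p k : (1 <= n)%nat -> (p + 1 <= k)%nat ->
  H n (- Z.of_nat p) / INR n ^ k =
  / INR (p + 1) * fsum 0 p (fun l => Binomial.C (p + 1) l * Bplus l / INR n ^ (k - p - 1 + l)).
Proof.
  intros Hn Hpk. assert (Hx := INR_ge1 n Hn).
  rewrite H_opp_faulhaber. unfold Rdiv at 1. rewrite Rmult_assoc, (Rmult_comm (fsum _ _ _)),
    <- fsum_scal. f_equal. apply fsum_ext. intros l Hl.
  replace (INR n ^ k) with (INR n ^ (p + 1 - l) * INR n ^ (k - p - 1 + l))
    by (rewrite <- pow_add; f_equal; lia).
  assert (INR n ^ (p + 1 - l) <> 0) by (apply pow_nonzero; lra).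
  assert (INR n ^ (k - p - 1 + l) <> 0) by (apply pow_nonzero; lra).
  field. split; assumption.
Qed.

Lemma Sterm_eq q k r n : (1 <= n)%nat ->
  Sterm q k 1 r n = / INR n ^ k * (H n q / (INR n + INR r)).
Proof.
  intros Hn. assert (Hx := INR_ge1 n Hn). assert (Hr := pos_INR r).
  assert (INR n ^ k <> 0) by (apply pow_nonzero; lra).
  unfold Sterm. field. split; [lra | assumption].
Qed.

Lemma Tterm_H_opp q p m r n : (1 <= n)%nat -> (p + 1 <= m)%nat ->
  Tterm q (- Z.of_nat p) m 1 r n =
  / INR (p + 1) *
  fsum 0 p (fun l => Binomial.C (p + 1) l * Bplus l * Sterm q (m - p - 1 + l) 1 r n).
Proof.
  intros Hn Hpm. assert (Hx := INR_ge1 n Hn). assert (Hr := pos_INR r).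
  transitivity (H n (- Z.of_nat p) / INR n ^ m * (H n q / (INR n + INR r))).
  { assert (INR n ^ m <> 0) by (apply pow_nonzero; lra).
    unfold Tterm. field. split; [lra | assumption]. }
  rewrite H_opp_div_pow by assumption.
  rewrite Rmult_assoc, (Rmult_comm (fsum _ _ _)), <- fsum_scal. f_equal.
  apply fsum_ext. intros l Hl.
  rewrite Sterm_eq by exact Hn. unfold Rdiv. ring.
Qed.

Lemma Sterm_H_opp p k r n : (1 <= n)%nat -> (p + 1 <= k)%nat ->
  Sterm (- Z.of_nat p) k 1 r n =
  / INR (p + 1) * fsum 0 p (fun l => Binomial.C (p + 1) l * Bplus l * Sterm 0 (k - p + l) 1 r n).
Proof.
  intros Hn Hpk. assert (Hx := INR_ge1 n Hn). assert (Hr := pos_INR r).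
  transitivity (H n (- Z.of_nat p) / INR n ^ k * / (INR n + INR r)).
  { assert (INR n ^ k <> 0) by (apply pow_nonzero; lra).
    unfold Sterm. field. split; [lra | assumption]. }
  rewrite H_opp_div_pow by assumption.
  rewrite Rmult_assoc, (Rmult_comm (fsum _ _ _)), <- fsum_scal. f_equal.
  apply fsum_ext. intros l Hl.
  rewrite Sterm_eq, H_Z0 by exact Hn.
  replace (k - p + l)%nat with (S (k - p - 1 + l)) by lia. simpl pow.
  assert (INR n ^ (k - p - 1 + l) <> 0) by (apply pow_nonzero; lra).
  field. split; [lra | split; [assumption | lra]].
Qed.

Lemma Tsum_nat_opp p1 p2 m r : (1 <= p1)%nat -> (p2 + 2 <= m)%nat ->
  ex_sum1 (Tterm (Z.of_nat p1) (- Z.of_nat p2) m 1 r) /\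
  Tsum (Z.of_nat p1) (- Z.of_nat p2) m 1 r =
    / INR (p2 + 1) *
    fsum 0 p2 (fun l => Binomial.C (p2 + 1) l * Bplus l * Ssum (Z.of_nat p1) (m - p2 - 1 + l) 1 r).
Proof.
  intros Hp1 Hm. apply sum1_is_series.
  eapply is_series_ext; [intros k; symmetry; apply Tterm_H_opp; lia|].
  apply (is_series_Rscal (/ INR (p2 + 1))).
  apply (is_series_fsum 0 p2 (fun l k => _ * Sterm _ _ 1 r (S k))). intros l Hl.
  apply is_series_Rscal, Series_correct, ex_sum1_Sterm; lia.
Qed.

Lemma Tsum_opp_opp p1 p2 m r : (p1 + p2 + 3 <= m)%nat ->
  ex_sum1 (Tterm (- Z.of_nat p1) (- Z.of_nat p2) m 1 r) /\
  Tsum (- Z.of_nat p1) (- Z.of_nat p2) m 1 r =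
    / (INR (p1 + 1) * INR (p2 + 1)) *
    fsum 0 p1 (fun l1 => fsum 0 p2 (fun l2 =>
      Binomial.C (p1 + 1) l1 * Binomial.C (p2 + 1) l2 * Bplus l1 * Bplus l2 *
      Ssum 0 (m - p1 - p2 - 1 + l1 + l2) 1 r)).
Proof.
  intros Hm. apply sum1_is_series.
  apply (is_series_ext (fun k => / INR (p2 + 1) * fsum 0 p2 (fun l2 =>
           Binomial.C (p2 + 1) l2 * Bplus l2 * (/ INR (p1 + 1) * fsum 0 p1 (fun l1 =>
             Binomial.C (p1 + 1) l1 * Bplus l1 * Sterm 0 (m - p2 - 1 + l2 - p1 + l1) 1 r (S k)))))).
  { intros k. rewrite Tterm_H_opp by lia. f_equal. apply fsum_ext. intros l2 Hl2.
    rewrite Sterm_H_opp by lia. reflexivity. }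
  replace (/ (INR (p1 + 1) * INR (p2 + 1)) * _)
    with (/ INR (p2 + 1) * fsum 0 p2 (fun l2 => Binomial.C (p2 + 1) l2 * Bplus l2 *
            (/ INR (p1 + 1) * fsum 0 p1 (fun l1 => Binomial.C (p1 + 1) l1 * Bplus l1 *
               Ssum 0 (m - p2 - 1 + l2 - p1 + l1) 1 r)))).
  2: { rewrite fsum_swap, Rinv_mult, <- !fsum_scal. apply fsum_ext. intros l2 Hl2.
       rewrite <- !fsum_scal. apply fsum_ext. intros l1 Hl1.
       replace (m - p2 - 1 + l2 - p1 + l1)%nat with (m - p1 - p2 - 1 + l1 + l2)%nat by lia. ring. }
  apply (is_series_Rscal (/ INR (p2 + 1))).
  apply (is_series_fsum 0 p2 (fun l2 k => _ * (_ * fsum 0 p1 (fun l1 => _ * Sterm 0 _ 1 r (S k))))).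
  intros l2 Hl2. apply is_series_Rscal, is_series_Rscal.
  apply (is_series_fsum 0 p1 (fun l1 k => _ * Sterm 0 _ 1 r (S k))). intros l1 Hl1.
  apply is_series_Rscal, Series_correct, ex_sum1_Sterm_0. lia.
Qed.

Lemma partial_fraction_pow_shift m x r : (1 <= m)%nat -> 0 < x -> 0 < r ->
  / (x ^ m * (x + r)) =
  fsum 1 m (fun i => (-1) ^ (m - i) / r ^ (m - i + 1) / x ^ i) + (-1) ^ m / r ^ m / (x + r).
Proof.
  intros Hm Hx Hr. induction m as [|m IH]; [lia|].
  destruct (Nat.eq_dec m 0) as [->|Hm0]; [rewrite fsum_single; simpl; field; lra|].
  assert (x ^ m <> 0) by (apply pow_nonzero; lra).
  assert (r ^ m <> 0) by (apply pow_nonzero; lra).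
  replace (/ (x ^ S m * (x + r))) with (/ x * / (x ^ m * (x + r))) by (simpl; field; lra).
  rewrite IH, (fsum_first 1 (S m)), fsum_shift by lia.
  replace (S m - 1 + 1)%nat with (S m) by lia. replace (S m - 1)%nat with m by lia.
  rewrite (fsum_ext 1 m (fun k => (-1) ^ (S m - S k) / r ^ (S m - S k + 1) / x ^ S k)
                        (fun k => / x * ((-1) ^ (m - k) / r ^ (m - k + 1) / x ^ k))).
  2: { intros k Hk. replace (S m - S k)%nat with (m - k)%nat by lia. simpl pow at 3.
       field. repeat split; try apply pow_nonzero; lra. }
  rewrite fsum_scal. simpl pow. field. lra.
Qed.

Lemma inv_sub_inv_add x r : (1 <= r)%nat ->
  / x - / (x + INR r) = fsum 0 (r - 1) (fun b => / (x + INR b) - / (x + INR (S b))).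
Proof.
  intros Hr. rewrite (fsum_telescope (r - 1) (fun b => / (x + INR b))).
  replace (S (r - 1)) with r by lia. simpl INR. rewrite Rplus_0_r. reflexivity.
Qed.

Lemma Tterm_nat_decomp p1 p2 m r n : (1 <= m)%nat -> (1 <= r)%nat -> (1 <= n)%nat ->
  Tterm (Z.of_nat p1) (Z.of_nat p2) m 1 r n =
  fsum 2 m (fun i => (-1) ^ (m - i) / INR r ^ (m - i + 1) * (Hprod p1 p2 n / INR n ^ i))
  + (-1) ^ (m - 1) / INR r ^ m *
    fsum 0 (r - 1) (fun b => Hprod p1 p2 n * (/ (INR n + INR b) - / (INR n + INR (S b)))).
Proof.
  intros Hm Hr Hn.
  assert (Hx := INR_ge1 n Hn). assert (Hr1 := INR_ge1 r Hr).
  rewrite fsum_scal, <- inv_sub_inv_add by exact Hr.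
  unfold Tterm. fold (Hprod p1 p2 n). rewrite pow_1.
  unfold Rdiv at 1. rewrite partial_fraction_pow_shift, fsum_first by (lia || lra).
  rewrite (fsum_ext 2 m
             (fun i => (-1) ^ (m - i) / INR r ^ (m - i + 1) * (Hprod p1 p2 n / INR n ^ i))
             (fun i => Hprod p1 p2 n * ((-1) ^ (m - i) / INR r ^ (m - i + 1) / INR n ^ i)))
    by (intros; unfold Rdiv; ring).
  rewrite fsum_scal. replace (m - 1 + 1)%nat with m by lia.
  replace ((-1) ^ m) with (- (-1) ^ (m - 1))
    by (replace m with (S (m - 1)) at 2 by lia; simpl; ring).
  assert (INR r ^ m <> 0) by (apply pow_nonzero; lra).
  simpl pow. field. lra.
Qed.

Lemma Hprod_S_sub p1 p2 b n :
  (Hprod p1 p2 (S n) - Hprod p1 p2 n) * / (INR (S n) + INR b) =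
  Sterm (Z.of_nat p1) p2 1 b (S n) + Sterm (Z.of_nat p2) p1 1 b (S n)
  - Sterm 0 (p1 + p2 + 1) 1 b (S n).
Proof.
  unfold Hprod, Sterm. rewrite H_Z0, !H_nat_S.
  assert (Hx : 0 < INR (S n)) by (apply lt_0_INR; lia). assert (Hb := pos_INR b).
  rewrite (pow_add _ (p1 + p2) 1), (pow_add _ p1 p2).
  assert (INR (S n) ^ p1 <> 0) by (apply pow_nonzero; lra).
  assert (INR (S n) ^ p2 <> 0) by (apply pow_nonzero; lra).
  field. repeat split; lra.
Qed.

Lemma is_lim_seq_Hprod_div p1 p2 b : (1 <= p1)%nat -> (1 <= p2)%nat ->
  is_lim_seq (fun N => Hprod p1 p2 (S N) * / (INR (S (S N)) + INR b)) 0.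
Proof.
  intros Hp1 Hp2.
  apply (is_lim_seq_le_le (fun _ => 0) _ (fun N => 16 * / sqrt (INR (S N))));
    [|apply is_lim_seq_const|].
  - intros N. assert (Hb := pos_INR b). assert (Hx := INR_ge1 (S N) ltac:(lia)).
    destruct (Hprod_bound p1 p2 (S N) Hp1 Hp2) as [H0 H1].
    assert (Hs := sqrt_sqrt (INR (S N)) ltac:(lra)).
    assert (Hs0 : 0 < sqrt (INR (S N))) by (apply sqrt_lt_R0; lra).
    rewrite S_INR with (n := S N).
    split; [apply Rmult_le_pos; [exact H0 | left; apply Rinv_0_lt_compat; lra]|].
    apply (Rle_trans _ (16 * sqrt (INR (S N)) * / INR (S N))).
    + apply Rmult_le_compat; [exact H0 | left; apply Rinv_0_lt_compat; lra | exact H1 |].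
      apply Rinv_le_contravar; lra.
    + right. rewrite <- Hs at 2. field. lra.
  - replace (Finite 0) with (Rbar_mult 16 0) by (simpl; f_equal; ring).
    apply is_lim_seq_scal_l, is_lim_seq_inv_sqrt.
Qed.

Definition Hprod_incr_sum (p1 p2 b : nat) : R :=
  Ssum (Z.of_nat p1) p2 1 b + Ssum (Z.of_nat p2) p1 1 b - Ssum 0 (p1 + p2 + 1) 1 b.

Lemma is_series_Hprod_telescope p1 p2 b : (1 <= p1)%nat -> (1 <= p2)%nat ->
  is_series (fun k => Hprod p1 p2 (S k) * (/ (INR (S k) + INR b) - / (INR (S k) + INR (S b))))
    (Hprod_incr_sum p1 p2 b).
Proof.
  intros Hp1 Hp2.
  eapply is_series_ext;
    [|apply (is_series_abel (Hprod p1 p2) (fun n => / (INR n + INR b)))].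
  - intros k. cbv beta. rewrite !S_INR.
    replace (INR k + 1 + 1 + INR b) with (INR k + 1 + (INR b + 1)) by ring. reflexivity.
  - unfold Hprod. rewrite H_empty. ring.
  - apply is_lim_seq_Hprod_div; assumption.
  - eapply is_series_ext; [intros k; symmetry; apply Hprod_S_sub|].
    apply (is_series_minus (V := R_NormedModule)); [apply is_series_Rplus|];
      apply Series_correct;
      [apply ex_sum1_Sterm | apply ex_sum1_Sterm | apply ex_sum1_Sterm_0]; lia.
Qed.

Lemma Ssum_nat_r0 p q : Ssum (Z.of_nat p) q 1 0 = ES2 p (q + 1).
Proof.
  apply Series_ext. intros k. unfold Sterm. change (INR 0) with 0.
  rewrite Rplus_0_r, pow_add. reflexivity.
Qed.

Lemma Ssum_0_r0 s : Ssum 0 s 1 0 = zeta s.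
Proof.
  apply Series_ext. intros k. unfold Sterm. change (INR 0) with 0.
  rewrite Rplus_0_r, H_Z0, pow_1.
  assert (0 < INR (S k)) by (apply lt_0_INR; lia).
  assert (INR (S k) ^ s <> 0) by (apply pow_nonzero; lra).
  field. split; lra.
Qed.

Lemma Tsum_nat_nat p1 p2 m r : (1 <= p1)%nat -> (1 <= p2)%nat -> (1 <= m)%nat -> (1 <= r)%nat ->
  let c := (-1) ^ (m - 1) / INR r ^ m in
  ex_sum1 (Tterm (Z.of_nat p1) (Z.of_nat p2) m 1 r) /\
  Tsum (Z.of_nat p1) (Z.of_nat p2) m 1 r =
    fsum 2 m (fun i => (-1) ^ (m - i) / INR r ^ (m - i + 1) * ES3 p1 p2 i)
    + c * (ES2 p1 (p2 + 1) + ES2 p2 (p1 + 1))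
    - c * zeta (p1 + p2 + 1)
    + c * fsum 1 (r - 1) (fun b => Ssum (Z.of_nat p1) p2 1 b)
    + c * (fsum 1 (r - 1) (fun b => Ssum (Z.of_nat p2) p1 1 b)
           - fsum 1 (r - 1) (fun b => Ssum 0 (p1 + p2 + 1) 1 b)).
Proof.
  intros Hp1 Hp2 Hm Hr c.
  replace (_ + c * (_ - _)) with
    (fsum 2 m (fun i => (-1) ^ (m - i) / INR r ^ (m - i + 1) * ES3 p1 p2 i)
     + c * fsum 0 (r - 1) (Hprod_incr_sum p1 p2)).
  2: { rewrite (fsum_first 0 (r - 1)) by lia. unfold Hprod_incr_sum at 1.
       rewrite !Ssum_nat_r0, Ssum_0_r0. unfold Hprod_incr_sum. rewrite fsum_sub, fsum_add.
       set (S1 := fsum 1 (r - 1) (Ssum (Z.of_nat p1) p2 1)).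
       set (S2 := fsum 1 (r - 1) (Ssum (Z.of_nat p2) p1 1)).
       set (S3 := fsum 1 (r - 1) (Ssum 0 (p1 + p2 + 1) 1)). ring. }
  apply sum1_is_series.
  eapply is_series_ext; [intros k; symmetry; apply Tterm_nat_decomp; lia|].
  apply is_series_Rplus.
  - apply (is_series_fsum 2 m (fun i k => _ * (Hprod p1 p2 (S k) / INR (S k) ^ i))).
    intros i Hi. apply is_series_Rscal.
    apply (Series_correct (fun k => Hprod p1 p2 (S k) / INR (S k) ^ i)).
    apply ex_sum1_Hprod_div_pow; lia.
  - apply is_series_Rscal.
    apply (is_series_fsum 0 (r - 1) (fun b k => Hprod p1 p2 (S k) * _)).
    intros b _. apply is_series_Hprod_telescope; assumption.
Qed.

Theorem lemma8 :
  (* (i) *)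
  (forall p1 p2 m r : nat, (1 <= p1)%nat -> (1 <= p2)%nat -> (1 <= m)%nat -> (1 <= r)%nat ->
    let c := (-1) ^ (m - 1) / INR r ^ m in
    ex_sum1 (Tterm (Z.of_nat p1) (Z.of_nat p2) m 1 r) /\
    Tsum (Z.of_nat p1) (Z.of_nat p2) m 1 r =
      fsum 2 m (fun i => (-1) ^ (m - i) / INR r ^ (m - i + 1) * ES3 p1 p2 i)
      + c * (ES2 p1 (p2 + 1) + ES2 p2 (p1 + 1))
      - c * zeta (p1 + p2 + 1)
      + c * fsum 1 (r - 1) (fun b => Ssum (Z.of_nat p1) p2 1 b)
      + c * (fsum 1 (r - 1) (fun b => Ssum (Z.of_nat p2) p1 1 b)
             - fsum 1 (r - 1) (fun b => Ssum 0 (p1 + p2 + 1) 1 b)))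
  /\
  (* (ii) *)
  (forall p1 p2 m r : nat, (1 <= p1)%nat -> (1 <= m)%nat -> (1 <= r)%nat ->
    (p2 + 2 <= m)%nat ->
    ex_sum1 (Tterm (Z.of_nat p1) (- Z.of_nat p2) m 1 r) /\
    Tsum (Z.of_nat p1) (- Z.of_nat p2) m 1 r =
      / INR (p2 + 1) *
      fsum 0 p2 (fun l => Binomial.C (p2 + 1) l * Bplus l *
                          Ssum (Z.of_nat p1) (m - p2 - 1 + l) 1 r))
  /\
  (* (iii) *)
  (forall p1 p2 m r : nat, (1 <= m)%nat -> (1 <= r)%nat ->
    (p1 + p2 + 3 <= m)%nat ->
    ex_sum1 (Tterm (- Z.of_nat p1) (- Z.of_nat p2) m 1 r) /\
    Tsum (- Z.of_nat p1) (- Z.of_nat p2) m 1 r =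
      / (INR (p1 + 1) * INR (p2 + 1)) *
      fsum 0 p1 (fun l1 => fsum 0 p2 (fun l2 =>
        Binomial.C (p1 + 1) l1 * Binomial.C (p2 + 1) l2 * Bplus l1 * Bplus l2 *
        Ssum 0 (m - p1 - p2 - 1 + l1 + l2) 1 r))).
Proof.
  split; [|split].
  - exact Tsum_nat_nat.
  - intros p1 p2 m r Hp1 _ _ Hm. exact (Tsum_nat_opp p1 p2 m r Hp1 Hm).
  - intros p1 p2 m r _ _ Hm. exact (Tsum_opp_opp p1 p2 m r Hm).
Qed.
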